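(* Let $X\subset\mathbb{R}^n$ be bounded, let $X_I, X_G\subset X$ with $X_G$ compact, and let $\partial X_G$ denote the boundary of $X_G$. Let $f\colon X\to\mathbb{R}^n$ define the dynamics $x(k+1)=f(x(k))$ (assumed to have unique solutions). Fix $T\in\mathbb{N}_+$ and let $\Xi$ be the set of all trajectories $\xi=\{x(k)\}_{k=0}^T$ consistent with these dynamics and with $x(0)\in X_I$. Let $V\colon\mathbb{R}^n\to\mathbb{R}$ be continuous and fix $\delta$ with $\delta>-\inf_{x\in X_I}V(x)\geq 0$. Suppose that (i) $V(x)\le 0$ for all $x\in X_I$; (ii) $V(x)\ge-\delta$ for all $x\in\partial X_G$; (iii) $V(x)>-\delta$ for all $x\in X\setminus X_G$; (iv) $V(x)>0$ for all $x\in\mathbb{R}^n\setminus X$; (v) for every trajectory $\xi=\{x(k)\}_{k=0}^T\in\Xi$, $$V(x(k+1))-V(x(k))<-\frac1T\Big(\sup_{x\in X_I}V(x)+\delta\Big),\qquad k=0,\dots,k_G-1,$$ where $k_G:=\min\{k\in\{0,\dots,T\}: V(x(k))\le-\delta\}$, or $k_G=T$ if no such $k$ exists. Then $V$ is a reachability certificate: for every $\xi\in\Xi$ there exists $k\in\{0,\dots,T\}$ with $x(k)\in X_G$.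
   Context: Trajectories are finite sequences of states generated by the deterministic discrete-time dynamics from an initial state in $X_I$. *)

From HB Require Import structures.
From mathcomp Require Import all_boot all_order all_algebra.
From mathcomp Require Import all_classical all_reals all_analysis.
Set Implicit Arguments. Unset Strict Implicit. Unset Printing Implicit Defensive.
Import Order.TTheory GRing.Theory Num.Theory.
Import numFieldNormedType.Exports.
Local Open Scope classical_set_scope.
Local Open Scope ring_scope.

Definition boundary {T : topologicalType} (A : set T) : set T :=
  closure A `\` A^°.

(* xi is a trajectory of length T of x(k+1) = f(x(k)), f : X -> R^n,
   starting in XI.  f is given as a total function but is only ever
   applied to states in X. *)
Definition is_traj {R : realType} {n : nat} (X XI : set 'rV[R]_n)
  (f : 'rV[R]_n -> 'rV[R]_n) (T : nat) (xi : nat -> 'rV[R]_n) : Prop :=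
  XI (xi 0%N) /\
  (forall k : nat, (k < T)%N -> X (xi k) /\ xi k.+1 = f (xi k)).

Definition kG {R : realType} {n : nat} (V : 'rV[R]_n -> R) (delta : R)
  (T : nat) (xi : nat -> 'rV[R]_n) : nat :=
  minn (find (fun k => V (xi k) <= - delta) (iota 0 T.+1)) T.

From HB Require Import structures.
From mathcomp Require Import all_boot all_order all_algebra.
From mathcomp Require Import all_classical all_reals all_analysis.
Import Order.TTheory GRing.Theory Num.Theory.
Import numFieldNormedType.Exports.
Local Open Scope classical_set_scope.
Local Open Scope ring_scope.

(* If a trajectory never meets X_G, then V stays above -delta along it by
   (iii) and (iv), so k_G = T and (v) applies at every step.  Summing the T
   decrements, V(x(T)) <= V(x(0)) - (sup_{X_I} V + delta) <= -delta, which
   contradicts V(x(T)) > -delta. *)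

Lemma kG_horizon (R : realType) (n : nat) (V : 'rV[R]_n -> R) (delta : R)
    (T : nat) (xi : nat -> 'rV[R]_n) :
  (forall k, (k <= T)%N -> - delta < V (xi k)) -> kG V delta T xi = T.
Proof.
move=> V_gt; rewrite /kG hasNfind ?size_iota ?minnE ?subSnn ?subn1 //.
apply/hasPn => k; rewrite mem_iota add0n => /andP[_ kT].
by rewrite -ltNge V_gt.
Qed.

Lemma le_decrement_telescope {R : numDomainType} {u : nat -> R} {c : R}
    {T : nat} :
  (forall k, (k < T)%N -> u k.+1 - u k <= - c) -> u T <= u 0%N - T%:R * c.
Proof.
elim: T => [|T IH] step; first by rewrite mul0r subr0.
rewrite -natr1 mulrDl mul1r opprD addrA -[u T.+1](subrK (u T)) [leRHS]addrC.
exact: lerD (step T (ltnSn T)) (IH (fun k kT => step k (ltnW kT))).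
Qed.

Lemma ereal_sup_image_EFin (R : realType) (T : Type) (V : T -> R)
    (A : set T) :
  has_ubound (V @` A) -> A !=set0 ->
  ereal_sup [set (V x)%:E | x in A] = (sup (V @` A))%:E.
Proof.
move=> ubA [x Ax]; rewrite -ereal_sup_EFin //; last by exists (V x), x.
by rewrite image_comp.
Qed.

Theorem proposition1 (R : realType) (n : nat)
  (X XI XG : set 'rV[R]_n) (f : 'rV[R]_n -> 'rV[R]_n) (T : nat)
  (V : 'rV[R]_n -> R) (delta : R) :
  bounded_set X -> XI `<=` X -> XG `<=` X -> compact XG ->
  (0 < T)%N ->
  continuous V ->
  (0 <= - ereal_inf [set (V x)%:E | x in XI])%E ->
  (- ereal_inf [set (V x)%:E | x in XI] < delta%:E)%E ->
  (forall x, XI x -> V x <= 0) ->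
  (forall x, boundary XG x -> V x >= - delta) ->
  (forall x, (X `\` XG) x -> V x > - delta) ->
  (forall x, ~ X x -> V x > 0) ->
  (forall xi, is_traj X XI f T xi ->
     forall k : nat, (k < kG V delta T xi)%N ->
       ((V (xi k.+1) - V (xi k))%:E <
          - ((ereal_sup [set (V x)%:E | x in XI] + delta%:E) / (T%:R)%:E))%E) ->
  forall xi, is_traj X XI f T xi ->
    exists k : nat, (k <= T)%N /\ XG (xi k).
Proof.
move=> _ _ _ _ T_gt0 _ inf_ge0 inf_lt_delta V_XI _ V_XmG V_nX V_decr xi xi_traj.
have delta_gt0 : 0 < delta by rewrite -lte_fin (le_lt_trans inf_ge0).
apply: contrapT => no_goal.
have V_gt k : (k <= T)%N -> - delta < V (xi k).
  move=> kT; have [Xk|nXk] := pselect (X (xi k)).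
    by apply: V_XmG; split => // Gk; apply: no_goal; exists k.
  by apply: lt_trans (V_nX _ nXk); rewrite oppr_lt0.
have [xi0_XI _] := xi_traj.
have ubXI : has_ubound (V @` XI) by exists 0 => _ [x Ix <-]; apply: V_XI.
set s := sup (V @` XI).
have V0_le_s : V (xi 0%N) <= s by apply: ub_le_sup => //; exists (xi 0%N).
have T_neq0 : T%:R != 0 :> R by rewrite pnatr_eq0 -lt0n.
have step k : (k < T)%N -> V (xi k.+1) - V (xi k) <= - ((s + delta) / T%:R).
  move=> kT; apply/ltW; move: (V_decr xi xi_traj k).
  rewrite kG_horizon // ereal_sup_image_EFin //; last by exists (xi 0%N).
  by move=> /(_ kT); rewrite -EFinD inver (negbTE T_neq0) -EFinM -EFinN lte_fin.
have VT_le : V (xi T) <= - delta.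
  apply: le_trans (le_decrement_telescope step) _.
  by rewrite mulrC divfK // opprD addrA gerDr subr_le0.
by have := V_gt T (leqnn T); rewrite ltNge VT_le.
Qed.
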